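(* In the setting below, $\langle M^*,\in\rangle$ satisfies the Powerset axiom; concretely, for every $x\in M$ there is $y\in M$ with $y=\mathcal{P}(x)\cap M$ (the collection of all elements of $M$ that are subsets of $x$ belongs to $M$).
   Context: Work in ZFA (ZF with a set $A$ of atoms, i.e. urelements that have no elements), extended by a primitive binary relation $\preccurlyeq$ on $A$, with Separation and Replacement holding for formulas mentioning $\preccurlyeq$. $A$ is an infinite set of atoms and $\preccurlyeq$ is a pre-ordering (reflexive, transitive) on $A$ with no minimal elements: for every $a\in A$ there is $b\in A$ with $b\preccurlyeq a$ and not $a\preccurlyeq b$. For $a\in A$, $pr(a)=\{b\in A:b\preccurlyeq a\}$; $LO(A,\preccurlyeq)$ is the set of nonempty $x\subseteq A$ with $pr(a)\subseteq x$ for all $a\in x$. For a set $X$ of sets, $LO(X,\subseteq)$ is the set of nonempty $x\subseteq X$ such that for every $y\in x$ and every $z\in X$ with $z\subseteq y$, $z\in x$. The magmatic hierarchy: $M_1=LO(A,\preccurlyeq)$; $M_{\alpha+1}=LO(M_\alpha,\subseteq)$ for $\alpha\geq1$; $M_\alpha=\bigcup_{1\leq\beta<\alpha}M_\beta$ for limit $\alpha$; $M=\bigcup_{\alpha\geq1}M_\alpha$. $M^*=M\cup A$, viewed as a structure for the language of ZFA (membership, with sorts for sets and atoms). *)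

(* A model of ZFA in type theory: Aczel-style well-founded
   trees with atoms, membership taken up to extensional equality. *)
Set Implicit Arguments.

(* A single universe of "small" types: index types of sets, the set of atoms,
   and the well-orders used to index the magmatic hierarchy all live here,
   so that the ordinals indexing the hierarchy are exactly the ordinals of
   the model. *)
Definition U := Type.

Inductive V (A : U) : Type :=
| Atom : A -> V A
| VSet : forall K : U, (K -> V A) -> V A.

Arguments Atom {A} _.
Arguments VSet {A} K _.

Fixpoint veq {A : U} (x : V A) : V A -> Prop :=
  match x return V A -> Prop with
  | Atom a => fun y => match y with Atom b => a = b | VSet _ _ => False end
  | VSet K f => fun y =>
      match y with
      | Atom _ => False
      | VSet J g => (forall i, exists j, veq (f i) (g j)) /\
                    (forall j, exists i, veq (f i) (g j))
      end
  end.

Definition mem {A : U} (z x : V A) : Prop :=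
  match x with
  | Atom _ => False
  | VSet K f => exists i, veq z (f i)
  end.

Definition isSet {A : U} (x : V A) : Prop :=
  match x with Atom _ => False | VSet _ _ => True end.

Definition subset {A : U} (z x : V A) : Prop :=
  forall w, mem w z -> mem w x.

Definition LO_atoms {A : U} (le : A -> A -> Prop) (x : V A) : Prop :=
  isSet x /\ (exists z, mem z x) /\
  (forall z, mem z x -> exists a, veq z (Atom a)) /\
  (forall a b, mem (Atom a) x -> le b a -> mem (Atom b) x).

Definition LO_sub {A : U} (X : V A -> Prop) (x : V A) : Prop :=
  isSet x /\ (exists z, mem z x) /\
  (forall z, mem z x -> X z) /\
  (forall y z, mem y x -> X z -> subset z y -> mem z x).

Definition wellorder {W : U} (lt : W -> W -> Prop) : Prop :=
  well_founded lt /\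
  (forall a b c, lt a b -> lt b c -> lt a c) /\
  (forall a b, lt a b \/ a = b \/ lt b a).

Definition succ_of {W : U} (lt : W -> W -> Prop) (u w : W) : Prop :=
  lt u w /\ forall v, lt u v -> lt v w -> False.

(* F is the magmatic hierarchy along the well-order (W, lt), whose least
   element plays the role of the ordinal 1:
   M_1 = LO(A,≼), M_{α+1} = LO(M_α,⊆), M_λ = ⋃_{1≤β<λ} M_β. *)
Definition magmatic_hier {A : U} (le : A -> A -> Prop) {W : U}
  (lt : W -> W -> Prop) (F : W -> V A -> Prop) : Prop :=
  forall w,
    ((forall u, ~ lt u w) -> forall x, F w x <-> LO_atoms le x) /\
    (forall u, succ_of lt u w -> forall x, F w x <-> LO_sub (F u) x) /\
    ((exists u, lt u w) -> (forall u, ~ succ_of lt u w) ->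
       forall x, F w x <-> exists u, lt u w /\ F u x).

Definition inM {A : U} (le : A -> A -> Prop) (x : V A) : Prop :=
  exists (W : U) (lt : W -> W -> Prop) (F : W -> V A -> Prop) (w : W),
    wellorder lt /\ magmatic_hier le lt F /\ F w x.

(* If x ∈ M_α, then every element of M that is a subset of x already lies in
   M_α.  This is proved by ∈-induction on x: an M-subset of a set of atoms is a
   set of atoms, and an M-subset v of some x ∈ LO(M_β, ⊆) is ⊆-downward closed
   in M_β.  Indeed v ∈ LO(M_γ, ⊆) for some γ, and for s ∈ v ⊆ x the induction
   hypothesis applied to s ∈ M_γ puts every M-subset of s into M_γ, where v is
   ⊆-downward closed.  Hence the M-subsets of x form a nonempty ⊆-downward
   closed subset of M_α, i.e. an element of M_{α+1}. *)

From Stdlib Require Import Classical ProofIrrelevance.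

Set Implicit Arguments.

Lemma veq_refl {A : U} (x : V A) : veq x x.
Proof.
  induction x as [a | K f IH]; simpl; auto.
  split; intro i; exists i; auto.
Qed.

Lemma veq_sym {A : U} {x y : V A} : veq x y -> veq y x.
Proof.
  revert y; induction x as [a | K f IH]; intros [b | J g]; simpl; try tauto; try congruence.
  intros [Hfg Hgf]; split.
  - intro j; destruct (Hgf j) as [i Hi]; exists i; auto.
  - intro i; destruct (Hfg i) as [j Hj]; exists j; auto.
Qed.

Lemma veq_trans {A : U} {x y z : V A} : veq x y -> veq y z -> veq x z.
Proof.
  revert y z; induction x as [a | K f IH]; intros [b | J g] [c | L h]; simpl;
    try tauto; try congruence.
  intros [Hfg Hgf] [Hgh Hhg]; split.
  - intro i; destruct (Hfg i) as [j Hj]; destruct (Hgh j) as [l Hl]; exists l; eauto.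
  - intro l; destruct (Hhg l) as [j Hj]; destruct (Hgf j) as [i Hi]; exists i; eauto.
Qed.

Lemma mem_veq_l {A : U} {z z' x : V A} : veq z z' -> mem z x -> mem z' x.
Proof.
  destruct x as [a | K f]; simpl; auto.
  intros Hz [i Hi]; exists i; eauto using veq_trans, veq_sym.
Qed.

Lemma mem_veq_r {A : U} {z x x' : V A} : veq x x' -> mem z x -> mem z x'.
Proof.
  destruct x as [a | K f], x' as [b | J g]; simpl; try tauto.
  intros [Hfg _] [i Hi]; destruct (Hfg i) as [j Hj]; exists j; eauto using veq_trans.
Qed.

Lemma isSet_veq {A : U} {x x' : V A} : veq x x' -> isSet x -> isSet x'.
Proof. destruct x, x'; simpl; tauto. Qed.

Lemma LO_atoms_veq {A : U} {le : A -> A -> Prop} {x x' : V A} :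
  veq x x' -> LO_atoms le x -> LO_atoms le x'.
Proof.
  intros E [Hset [[z Hz] [Hat Hdown]]]; pose proof (veq_sym E) as E'.
  split; [exact (isSet_veq E Hset) | split; [| split]].
  - exists z; exact (mem_veq_r E Hz).
  - intros z' Hz'; exact (Hat z' (mem_veq_r E' Hz')).
  - intros a b Ha Hba; exact (mem_veq_r E (Hdown a b (mem_veq_r E' Ha) Hba)).
Qed.

Lemma LO_sub_veq {A : U} {X : V A -> Prop} {x x' : V A} :
  veq x x' -> LO_sub X x -> LO_sub X x'.
Proof.
  intros E [Hset [[z Hz] [HX Hdown]]]; pose proof (veq_sym E) as E'.
  split; [exact (isSet_veq E Hset) | split; [| split]].
  - exists z; exact (mem_veq_r E Hz).
  - intros z' Hz'; exact (HX z' (mem_veq_r E' Hz')).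
  - intros y t Hy Ht Hty; exact (mem_veq_r E (Hdown y t (mem_veq_r E' Hy) Ht Hty)).
Qed.

Lemma zero_succ_or_limit {W : U} (lt : W -> W -> Prop) (w : W) :
  (forall u, ~ lt u w) \/ (exists u, succ_of lt u w) \/
  ((exists u, lt u w) /\ (forall u, ~ succ_of lt u w)).
Proof.
  destruct (classic (exists u, lt u w)) as [Hlt | Hnlt].
  - destruct (classic (exists u, succ_of lt u w)) as [Hs | Hns]; [tauto |].
    right; right; split; [exact Hlt |].
    intros u Hu; apply Hns; exists u; exact Hu.
  - left; intros u Hu; apply Hnlt; exists u; exact Hu.
Qed.

Lemma well_founded_irrefl {W : U} {lt : W -> W -> Prop} :
  well_founded lt -> forall {u}, ~ lt u u.
Proof.
  intros lt_wf u; induction (lt_wf u) as [u _ IH]; intro H; exact (IH u H H).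
Qed.

Section Levels.

Variables (A : U) (le : A -> A -> Prop) (W : U) (lt : W -> W -> Prop)
  (F : W -> V A -> Prop).
Hypotheses (lt_wo : wellorder lt) (F_hier : magmatic_hier le lt F).

Lemma level_shape {w : W} {x : V A} :
  F w x -> LO_atoms le x \/ exists u, lt u w /\ LO_sub (F u) x.
Proof.
  destruct lt_wo as [lt_wf [lt_trans _]].
  revert x; induction (lt_wf w) as [w _ IH]; intros x Hx.
  destruct (F_hier w) as [Hzero [Hsucc Hlim]].
  destruct (zero_succ_or_limit lt w) as [Z | [[u S] | [L1 L2]]].
  - left; exact (proj1 (Hzero Z x) Hx).
  - right; exists u; split; [exact (proj1 S) | exact (proj1 (Hsucc u S x) Hx)].
  - destruct (proj1 (Hlim L1 L2 x) Hx) as [u [Hu Hux]].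
    destruct (IH u Hu x Hux) as [Hat | [u' [Hu' Hsub]]]; [left; exact Hat |].
    right; exists u'; split; [exact (lt_trans _ _ _ Hu' Hu) | exact Hsub].
Qed.

Lemma level_nonempty_set {w : W} {x : V A} : F w x -> isSet x /\ exists z, mem z x.
Proof.
  intro Hx; destruct (level_shape Hx) as [[Hset [Hne _]] | [u [_ [Hset [Hne _]]]]];
    split; assumption.
Qed.

Lemma level_atom_LO_atoms {w : W} {x : V A} {a : A} :
  F w x -> mem (Atom a) x -> LO_atoms le x.
Proof.
  intros Hx Ha; destruct (level_shape Hx) as [Hat | [u [_ [_ [_ [Hmem _]]]]]];
    [exact Hat |].
  destruct (level_nonempty_set (Hmem _ Ha)) as [[] _].
Qed.

Lemma level_transfer {b : W} {u v : V A} :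
  F b u -> (LO_atoms le u -> LO_atoms le v) ->
  (forall c, LO_sub (F c) u -> LO_sub (F c) v) -> F b v.
Proof.
  intros Hu Hatoms Hsub; revert u Hu Hatoms Hsub.
  induction (proj1 lt_wo b) as [b _ IH]; intros u Hu Hatoms Hsub.
  destruct (F_hier b) as [Hzero [Hsucc Hlim]].
  destruct (zero_succ_or_limit lt b) as [Z | [[c S] | [L1 L2]]].
  - apply (Hzero Z); apply Hatoms, (Hzero Z), Hu.
  - apply (Hsucc c S); apply Hsub, (Hsucc c S), Hu.
  - destruct (proj1 (Hlim L1 L2 u) Hu) as [c [Hc Hcu]].
    apply (Hlim L1 L2); exists c; split; [exact Hc | exact (IH c Hc u Hcu Hatoms Hsub)].
Qed.

Lemma level_veq {w : W} {x x' : V A} : F w x -> veq x x' -> F w x'.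
Proof.
  intros Hx E; apply (level_transfer Hx).
  - exact (LO_atoms_veq E).
  - intro c; exact (LO_sub_veq E).
Qed.

End Levels.

Lemma inM_veq {A : U} {le : A -> A -> Prop} {x x' : V A} :
  inM le x -> veq x x' -> inM le x'.
Proof.
  intros [W [lt [F [w [Hwo [Hh Hx]]]]]] E.
  exists W, lt, F, w; split; [exact Hwo | split; [exact Hh | exact (level_veq Hwo Hh Hx E)]].
Qed.

Lemma inM_isSet {A : U} {le : A -> A -> Prop} {x : V A} : inM le x -> isSet x.
Proof. intros [W [lt [F [w [Hwo [Hh Hx]]]]]]; exact (proj1 (level_nonempty_set Hwo Hh Hx)). Qed.

Lemma level_subset_closed {A : U} {le : A -> A -> Prop} {u : V A} :
  forall {W : U} {lt : W -> W -> Prop} {F : W -> V A -> Prop},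
  wellorder lt -> magmatic_hier le lt F ->
  forall {b v}, F b u -> inM le v -> subset v u -> F b v.
Proof.
  induction u as [a | K f IH]; intros W lt F Hwo Hh b v Hu Hv Hvu.
  { destruct (level_nonempty_set Hwo Hh Hu) as [[] _]. }
  destruct Hv as [W' [lt' [F' [d [Hwo' [Hh' Hd]]]]]].
  destruct (level_nonempty_set Hwo' Hh' Hd) as [Hset [z Hz]].
  apply (level_transfer Hwo Hh Hu).
  - intros [_ [_ [Hat _]]]; destruct (Hat z (Hvu z Hz)) as [a Ha].
    exact (level_atom_LO_atoms Hwo' Hh' Hd (mem_veq_l Ha Hz)).
  - intros c [_ [_ [Hmem _]]].
    split; [exact Hset | split; [exists z; exact Hz | split]].
    + intros s Hs; exact (Hmem s (Hvu s Hs)).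
    + destruct (level_shape Hwo' Hh' Hd) as [[_ [_ [Hat _]]] | [d0 [_ [_ [_ [Hv0 Hdown]]]]]].
      * intros s t Hs _ _; exfalso.
        destruct (Hat s Hs) as [a Ha].
        destruct (level_nonempty_set Hwo Hh (level_veq Hwo Hh (Hmem s (Hvu s Hs)) Ha))
          as [[] _].
      * intros s t Hs Ht Hts; apply (Hdown s t Hs); [| exact Hts].
        destruct (Hvu s Hs) as [k Hk].
        apply (IH k W' lt' F' Hwo' Hh' d0).
        -- exact (level_veq Hwo' Hh' (Hv0 s Hs) Hk).
        -- exists W, lt, F, c; auto.
        -- intros r Hr; exact (mem_veq_r Hk (Hts r Hr)).
Qed.

Definition sep {A K : U} (f : K -> V A) (P : K -> Prop) : V A :=
  VSet {k | P k} (fun k => f (proj1_sig k)).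

Definition powerset_in {A K : U} (Q : V A -> Prop) (f : K -> V A) : V A :=
  VSet {P : K -> Prop | Q (sep f P)} (fun P => sep f (proj1_sig P)).

Lemma subset_veq_sep {A K : U} {f : K -> V A} {z : V A} :
  isSet z -> subset z (VSet K f) -> veq z (sep f (fun k => mem (f k) z)).
Proof.
  destruct z as [b | J g]; [contradiction |]; intros _ Hzf; simpl; split.
  - intro j; destruct (Hzf (g j) (ex_intro _ j (veq_refl _))) as [k Hk].
    exists (exist _ k (ex_intro _ j (veq_sym Hk))); exact Hk.
  - intros [k [j Hj]]; exists j; exact (veq_sym Hj).
Qed.

Lemma mem_powerset_in {A K : U} (Q : V A -> Prop) (f : K -> V A) :
  (forall x x', Q x -> veq x x' -> Q x') -> (forall x, Q x -> isSet x) ->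
  forall z, mem z (powerset_in Q f) <-> Q z /\ subset z (VSet K f).
Proof.
  intros Q_veq Q_set z; split.
  - intros [[P HP] Hz]; split; [exact (Q_veq _ _ HP (veq_sym Hz)) |].
    intros t Ht; destruct (mem_veq_r Hz Ht) as [[k Pk] Hk]; exists k; exact Hk.
  - intros [Hz Hzf]; pose proof (subset_veq_sep (Q_set z Hz) Hzf) as E.
    exists (exist (fun P => Q (sep f P)) _ (Q_veq _ _ Hz E)); exact E.
Qed.

Section TopExtension.

Variables (A : U) (le : A -> A -> Prop) (W : U) (lt : W -> W -> Prop)
  (F : W -> V A -> Prop) (w : W).
Hypotheses (lt_wo : wellorder lt) (F_hier : magmatic_hier le lt F).

(* [0, w] extended by a top element [None] that plays the role of w + 1. *)
Definition seg : U := {u : W | lt u w \/ u = w}.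

Definition ext_lt (a b : option seg) : Prop :=
  match a, b with
  | Some a, Some b => lt (proj1_sig a) (proj1_sig b)
  | Some _, None => True
  | None, _ => False
  end.

Definition ext_F (a : option seg) (x : V A) : Prop :=
  match a with
  | Some a => F (proj1_sig a) x
  | None => LO_sub (F w) x
  end.

Definition top_seg : seg := exist _ w (or_intror eq_refl).

Lemma ext_wellorder : wellorder ext_lt.
Proof.
  destruct lt_wo as [lt_wf [lt_trans lt_total]]; split; [| split].
  - assert (Acc_some : forall u p, Acc ext_lt (Some (exist _ u p))).
    { intro u; induction (lt_wf u) as [u _ IH]; intro p; constructor.
      intros [[v q] |] H; [exact (IH v H q) | contradiction]. }
    intros [[u p] |]; [apply Acc_some |].
    constructor; intros [[v q] |] H; [apply Acc_some | contradiction].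
  - intros [a |] [b |] [c |]; simpl; try tauto; apply lt_trans.
  - intros [[a p] |] [[b q] |]; simpl; auto.
    destruct (lt_total a b) as [H | [H | H]]; auto.
    subst b; rewrite (proof_irrelevance _ p q); auto.
Qed.

Lemma ext_hier_seg (b : seg) : 
  ((forall a, ~ ext_lt a (Some b)) -> forall x, ext_F (Some b) x <-> LO_atoms le x) /\
  (forall a, succ_of ext_lt a (Some b) -> forall x, ext_F (Some b) x <-> LO_sub (ext_F a) x) /\
  ((exists a, ext_lt a (Some b)) -> (forall a, ~ succ_of ext_lt a (Some b)) ->
     forall x, ext_F (Some b) x <-> exists a, ext_lt a (Some b) /\ ext_F a x).
Proof.
  destruct lt_wo as [_ [lt_trans _]]; destruct b as [b p]; simpl.
  destruct (F_hier b) as [Hzero [Hsucc Hlim]].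
  assert (below : forall u, lt u b -> lt u w \/ u = w).
  { intros u Hu; left; destruct p as [p | ->]; [exact (lt_trans _ _ _ Hu p) | exact Hu]. }
  split; [| split].
  - intro Z; apply Hzero; intros u Hu; exact (Z (Some (exist _ u (below u Hu))) Hu).
  - intros [[c q] |] [Hc Hgap]; simpl in *; [| contradiction].
    apply Hsucc; split; [exact Hc |].
    intros v Hcv Hvb; exact (Hgap (Some (exist _ v (below v Hvb))) Hcv Hvb).
  - intros [[[c q] |] Hc] Hnsucc; simpl in Hc; [| contradiction].
    assert (Hnsucc' : forall u, ~ succ_of lt u b).
    { intros u [Hu Hgap]; apply (Hnsucc (Some (exist _ u (below u Hu)))).
      split; [exact Hu |].
      intros [[v r] |] Huv Hvb; [exact (Hgap v Huv Hvb) | contradiction]. }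
    intro x; rewrite (Hlim (ex_intro _ c Hc) Hnsucc' x); split.
    + intros [u [Hu Hux]]; exists (Some (exist _ u (below u Hu))); auto.
    + intros [[[u r] |] [Hu Hux]]; [exists u; auto | contradiction].
Qed.

Lemma ext_hier_top :
  ((forall a, ~ ext_lt a None) -> forall x, ext_F None x <-> LO_atoms le x) /\
  (forall a, succ_of ext_lt a None -> forall x, ext_F None x <-> LO_sub (ext_F a) x) /\
  ((exists a, ext_lt a None) -> (forall a, ~ succ_of ext_lt a None) ->
     forall x, ext_F None x <-> exists a, ext_lt a None /\ ext_F a x).
Proof.
  destruct lt_wo as [lt_wf [lt_trans _]]; split; [| split].
  - intro Z; exfalso; exact (Z (Some top_seg) I).
  - intros [[c [q | ->]] |] [Hlt Hgap]; simpl in Hlt |- *; [| reflexivity | contradiction].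
    exfalso; exact (Hgap (Some top_seg) q I).
  - intros _ Hnsucc; exfalso; apply (Hnsucc (Some top_seg)); split; [exact I |].
    intros [[v [r | ->]] |] Hwv Hvtop; simpl in Hwv, Hvtop; [| | contradiction].
    + exact (well_founded_irrefl lt_wf (lt_trans _ _ _ Hwv r)).
    + exact (well_founded_irrefl lt_wf Hwv).
Qed.

Lemma ext_hier : magmatic_hier le ext_lt ext_F.
Proof. intros [b |]; [exact (ext_hier_seg b) | exact ext_hier_top]. Qed.

Lemma LO_sub_level_inM (y : V A) : LO_sub (F w) y -> inM le y.
Proof.
  intro Hy; exists (option seg), ext_lt, ext_F, None.
  split; [exact ext_wellorder | split; [exact ext_hier | exact Hy]].
Qed.

End TopExtension.

Theorem proposition4p11 (A : U) (le : A -> A -> Prop)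
  (A_infinite : exists f : nat -> A, forall m n, f m = f n -> m = n)
  (le_refl : forall a, le a a)
  (le_trans : forall a b c, le a b -> le b c -> le a c)
  (no_min : forall a, exists b, le b a /\ ~ le a b) :
  forall x : V A, inM le x ->
    exists y : V A, inM le y /\
      (forall z : V A, mem z y <-> (inM le z /\ subset z x)).
Proof.
  intros x Hx; pose proof Hx as [W [lt [F [w [Hwo [Hh Hwx]]]]]].
  destruct x as [a | K f]; [destruct (inM_isSet Hx) |].
  pose proof (mem_powerset_in (inM le) f (@inM_veq A le) (@inM_isSet A le)) as Hmem.
  exists (powerset_in (inM le) f); split; [| exact Hmem].
  apply (LO_sub_level_inM w Hwo Hh); split; [exact I | split; [| split]].
  - exists (VSet K f); apply Hmem; split; [exact Hx | intros t Ht; exact Ht].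
  - intros z Hz; apply Hmem in Hz as [HzM Hzx].
    exact (level_subset_closed Hwo Hh Hwx HzM Hzx).
  - intros y z Hy Hz Hzy; apply Hmem in Hy as [_ Hyx]; apply Hmem.
    split; [exists W, lt, F, w; auto | intros t Ht; exact (Hyx t (Hzy t Ht))].
Qed.
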